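(* Let $G$ be a finite simple undirected graph with $\alpha(G)=k$. Suppose $\{v_1,\ldots,v_k\}$ is an independent set of $G$ and $S=\{S_1,\ldots,S_k\}$ is a total clique covering of $G$ such that, for each $i=1,\ldots,k$, $S_i$ is the only member of $S$ containing $v_i$. Then $\theta_t(G)=\alpha(G)=k$ and $S$ is the only total clique covering of $G$ consisting of exactly $k$ cliques.
   Context: $\alpha(G)$ is the maximum size of an independent set of $G$. A clique is a set of pairwise adjacent vertices; a set $S$ of cliques of $G$ is a total clique covering if every vertex lies in some member of $S$ and every edge has both endpoints in some member of $S$. $\theta_t(G)$ is the minimum size of a total clique covering of $G$. *)

(* A finite simple graph: vertex type T : finType,
   adjacency e : rel T, assumed symmetric and irreflexive in the theorem. *)
From mathcomp Require Import all_boot.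
Set Implicit Arguments. Unset Strict Implicit. Unset Printing Implicit Defensive.

Section Graph.
Variables (T : finType) (e : rel T).

Definition independent (A : {set T}) : bool :=
  [forall x in A, forall y in A, ~~ e x y].

Definition clique (A : {set T}) : bool :=
  [forall x in A, forall y in A, (x != y) ==> e x y].

Definition total_clique_covering (S : {set {set T}}) : bool :=
  [&& [forall C in S, clique C],
      [forall x, exists C in S, x \in C] &
      [forall x, forall y, e x y ==> [exists C in S, (x \in C) && (y \in C)]]].

Definition alpha : nat := \max_(A : {set T} | independent A) #|A|.

(* The default value
   #|{set T}| is an upper bound on the size of any set of vertex subsets, and
   a total clique covering always exists (all cliques), so this is the min. *)
Definition theta_t : nat :=
  \big[minn/#|{set T}|]_(S : {set {set T}} | total_clique_covering S) #|S|.

End Graph.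

From mathcomp Require Import all_boot.
Set Implicit Arguments. Unset Strict Implicit. Unset Printing Implicit Defensive.

(* A clique meets an independent set in at most one vertex, so choosing for
   every vertex of an independent set A a clique of a covering containing it
   is injective: every total clique covering has at least #|A| members. The
   given covering S has exactly k = #|A| members, hence theta_t = k. If S' is
   another covering with k members, the same injection is onto S', so each
   v_i lies in a unique member S'_i of S'. For x adjacent to v_i, the edge
   v_i x lies in a member of S' (resp. S) containing v_i, which must be S'_i
   (resp. S_i); as S_i and S'_i are cliques through v_i, each contains the
   other. *)

Lemma big_minn_le (I : eqType) (r : seq I) (P : pred I) (F : I -> nat) idx x :
  x \in r -> P x -> \big[minn/idx]_(i <- r | P i) F i <= F x.
Proof.
elim: r => [//|y r IHr]; rewrite inE big_cons => /orP [/eqP <-|xr] Px.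
  by rewrite Px geq_minl.
case: (P y); last exact: IHr.
by rewrite geq_min (IHr xr Px) orbT.
Qed.

Section CliqueCovering.
Variables (T : finType) (e : rel T).

Lemma theta_tE (S : {set {set T}}) :
    total_clique_covering e S ->
    (forall S', total_clique_covering e S' -> #|S| <= #|S'|) ->
  theta_t e = #|S|.
Proof.
move=> covS minS; apply/eqP; rewrite eqn_leq; apply/andP; split.
  exact: big_minn_le (mem_index_enum _) covS.
apply: (big_ind (leq #|S|)) => [||S' /minS] //; first exact: max_card.
by move=> m n Sm Sn; rewrite leq_min Sm Sn.
Qed.

Lemma cliqueP (C : {set T}) x y :
  clique e C -> x \in C -> y \in C -> x != y -> e x y.
Proof.
move=> /forallP /(_ x) /implyP cC /cC /forallP /(_ y) /implyP cxC yC.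
exact: implyP (cxC yC).
Qed.

Lemma clique_independent_eq (C A : {set T}) x y :
    clique e C -> independent e A ->
    x \in C -> x \in A -> y \in C -> y \in A ->
  x = y.
Proof.
move=> cC /forallP indA xC xA yC yA; apply/eqP/negPn/negP => xy.
have /forallP /(_ y) := implyP (indA x) xA.
by rewrite yA (cliqueP cC xC yC xy).
Qed.

Section Covering.
Variables (S : {set {set T}}) (covS : total_clique_covering e S).

Lemma covering_clique C : C \in S -> clique e C.
Proof. by case/and3P: covS => /forallP cl _ _ /(implyP (cl C)). Qed.

Lemma covering_edge x y :
  e x y -> exists2 C, C \in S & (x \in C) && (y \in C).
Proof.
case/and3P: covS => _ _ /forallP /(_ x) /forallP /(_ y) /implyP edS /edS.
by move=> /existsP [C /andP [CS xyC]]; exists C.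
Qed.

Definition member_at x := odflt set0 [pick C in S | x \in C].

Lemma member_atP x : member_at x \in S /\ x \in member_at x.
Proof.
case/and3P: covS => _ /forallP /(_ x) /existsP [C /andP [CS xC]] _.
rewrite /member_at; case: pickP => [D /andP [DS xD] //|/(_ C)].
by rewrite CS xC.
Qed.

Lemma clique_sub_unique_member (C D : {set T}) x :
    clique e C -> x \in C -> D \in S -> x \in D ->
    (forall D', D' \in S -> x \in D' -> D' = D) ->
  C \subset D.
Proof.
move=> cC xC DS xD Donly; apply/subsetP => y yC.
have [<-|xy] := eqVneq x y; first exact: xD.
have [D' D'S /andP [xD' yD']] := covering_edge (cliqueP cC xC yC xy).
by rewrite -(Donly D' D'S xD').
Qed.

Section Independent.
Variables (A : {set T}) (indA : independent e A).

Lemma member_at_inj : {in A &, injective member_at}.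
Proof.
move=> x y xA yA mxy; have [mxS xmx] := member_atP x; have [_ ymy] := member_atP y.
rewrite -mxy in ymy.
exact: clique_independent_eq (covering_clique mxS) indA xmx xA ymy yA.
Qed.

Lemma imset_member_at_sub : member_at @: A \subset S.
Proof. by apply/subsetP => C /imsetP [x _ ->]; exact: (member_atP x).1. Qed.

Lemma leq_independent_covering : #|A| <= #|S|.
Proof.
rewrite -(card_in_imset member_at_inj).
exact: subset_leq_card imset_member_at_sub.
Qed.

Lemma unique_member_at x D :
    #|S| <= #|A| -> x \in A -> D \in S -> x \in D ->
  D = member_at x.
Proof.
move=> cardS xA DS xD.
have imS : member_at @: A = S.
  apply/eqP; rewrite eqEcard imset_member_at_sub.
  by rewrite (card_in_imset member_at_inj).
rewrite -imS in DS; case/imsetP: DS xD => y yA -> xmy.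
have [myS ymy] := member_atP y.
by rewrite (clique_independent_eq (covering_clique myS) indA xmy xA ymy yA).
Qed.

End Independent.
End Covering.
End CliqueCovering.

Theorem proposition1 (T : finType) (e : rel T)
    (e_sym : symmetric e) (e_irr : irreflexive e)
    (k : nat) (hk : alpha e = k)
    (v : 'I_k -> T) (v_inj : injective v)
    (v_ind : independent e [set v i | i in 'I_k])
    (S : 'I_k -> {set T})
    (S_cov : total_clique_covering e [set S i | i in 'I_k])
    (S_v : forall i, v i \in S i)
    (S_only : forall i (C : {set T}), C \in [set S j | j in 'I_k] ->
                v i \in C -> C = S i) :
  theta_t e = alpha e /\ alpha e = k /\
  (forall S' : {set {set T}}, total_clique_covering e S' -> #|S'| = k ->
     S' = [set S i | i in 'I_k]).
Proof.
have card_v : #|[set v i | i in 'I_k]| = k by rewrite card_imset ?card_ord.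
have min_covering S' : total_clique_covering e S' -> k <= #|S'|.
  by move=> covS'; rewrite -card_v; exact: (leq_independent_covering covS' v_ind).
have card_S : #|[set S i | i in 'I_k]| = k.
  apply/eqP; rewrite eqn_leq min_covering // andbT.
  by rewrite -[k in _ <= k]card_ord; exact: leq_imset_card.
have theta_k : theta_t e = k.
  by rewrite -card_S; apply: theta_tE => // S' /min_covering; rewrite card_S.
split; first by rewrite theta_k hk.
split=> // S' covS' card_S'.
have S_member i : S i = member_at S' (v i).
  have [mS' vm] := member_atP covS' (v i).
  apply/eqP; rewrite eqEsubset; apply/andP; split.
    apply: (clique_sub_unique_member covS' _ (S_v i) mS' vm).
      exact: (covering_clique S_cov (imset_f _ _)).
    by move=> D DS' vD; rewrite (unique_member_at covS' v_ind _ _ DS' vD) ?card_v ?card_S' ?imset_f.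
  apply: (clique_sub_unique_member S_cov (covering_clique covS' mS') vm).
  - exact: imset_f.
  - exact: S_v.
  - exact: S_only.
apply/esym/eqP; rewrite eqEcard card_S card_S' leqnn andbT.
by apply/subsetP => C /imsetP [i _ ->]; rewrite S_member; case: (member_atP covS' (v i)).
Qed.
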